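(* Let $C>0$. Then there exist $h_1\in(0,1)$ and $\varepsilon_0>0$ such that for all $h\in(0,h_1)$, for every subgroup $\widetilde\Gamma\subseteq\Gamma$ of finite index with $\widetilde X=\widetilde\Gamma\backslash\mathbb H$, for all $N\in\mathbb N$ with $N\le\varepsilon_0(\ell_0(\widetilde X)+\log h^{-1})$, for all $j\in\{1,\dots,2m\}$, all $z\in\mathcal D_j$ and all $\alpha,\beta\in\mathcal W_N^j$: if \[ \operatorname{Tr}\bigl(\operatorname{Ind}_{\widetilde\Gamma}^\Gamma\mathbf 1_{\widetilde\Gamma}\bigr)(\gamma_\alpha\gamma_\beta^{-1})\ne0\quad\text{and}\quad |\gamma_\alpha^{-1}.z-\gamma_\beta^{-1}.z|<Ch, \] then $\alpha=\beta$.
   Context: $\Gamma$ is a Schottky group given by a geometric construction: $m\in\mathbb N$, open Euclidean disks $\mathcal D_1,\dots,\mathcal D_{2m}\subset\mathbb C$ centered on $\mathbb R$ with pairwise disjoint closures, and $\gamma_1,\dots,\gamma_m\in\mathrm{PSL}_2(\mathbb R)$ with $\gamma_j$ mapping the exterior of $\mathcal D_j$ onto the interior of $\mathcal D_{j+m}$, freely generating $\Gamma$; $\gamma_j=\gamma_{j-m}^{-1}$ for $j\in\{m+1,\dots,2m\}$, indices mod $2m$. For $\alpha\in\{1,\dots,2m\}^N$, $\gamma_\alpha=\gamma_{\alpha_1}\cdots\gamma_{\alpha_N}$; $\mathcal W_N$ is the set of $\alpha$ with $\alpha_{i+1}\not\equiv\alpha_i+m\pmod{2m}$ for all $i<N$,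 and $\mathcal W_N^j=\{\alpha\in\mathcal W_N:\alpha_1\not\equiv j+m\pmod{2m}\}$. $\operatorname{Ind}_{\widetilde\Gamma}^\Gamma\mathbf 1_{\widetilde\Gamma}$ is the representation induced from the trivial character of $\widetilde\Gamma$. $\ell_0(\widetilde X)$ is the minimal length of a periodic geodesic on $\widetilde X$. *)

From Stdlib Require Import Reals List Arith ClassicalEpsilon.
Open Scope R_scope.

Definition Cx : Type := (R * R)%type.
Definition RtoC (x : R) : Cx := (x, 0).
Definition Cadd (z w : Cx) : Cx := (fst z + fst w, snd z + snd w).
Definition Csub (z w : Cx) : Cx := (fst z - fst w, snd z - snd w).
Definition Cmul (z w : Cx) : Cx :=
  (fst z * fst w - snd z * snd w, fst z * snd w + snd z * fst w).
Definition Cnorm2 (z : Cx) : R := fst z * fst z + snd z * snd z.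
Definition Cinv (z : Cx) : Cx := (fst z / Cnorm2 z, - snd z / Cnorm2 z).
Definition Cdiv (z w : Cx) : Cx := Cmul z (Cinv w).
Definition Cabs (z : Cx) : R := sqrt (Cnorm2 z).

(** * 2x2 real matrices; elements of PSL2(R) are represented by SL2(R) lifts *)
Record M2 : Type := mkM2 { m11 : R; m12 : R; m21 : R; m22 : R }.
Definition M2id : M2 := mkM2 1 0 0 1.
Definition M2mul (A B : M2) : M2 :=
  mkM2 (m11 A * m11 B + m12 A * m21 B) (m11 A * m12 B + m12 A * m22 B)
       (m21 A * m11 B + m22 A * m21 B) (m21 A * m12 B + m22 A * m22 B).
(* inverse of a determinant-one matrix *)
Definition M2inv (A : M2) : M2 := mkM2 (m22 A) (- m12 A) (- m21 A) (m11 A).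
Definition M2neg (A : M2) : M2 := mkM2 (- m11 A) (- m12 A) (- m21 A) (- m22 A).
Definition M2det (A : M2) : R := m11 A * m22 A - m12 A * m21 A.
Definition M2tr (A : M2) : R := m11 A + m22 A.
(* equality in PSL2(R) = SL2(R)/{+-1} *)
Definition peq (A B : M2) : Prop := A = B \/ A = M2neg B.

(* on finite points (used where the image is known to be finite) *)
Definition mobius_fin (A : M2) (z : Cx) : Cx :=
  Cdiv (Cadd (Cmul (RtoC (m11 A)) z) (RtoC (m12 A)))
       (Cadd (Cmul (RtoC (m21 A)) z) (RtoC (m22 A))).
(* on the Riemann sphere, None = infinity *)
Definition mobius (A : M2) (p : option Cx) : option Cx :=
  match p with
  | Some z =>
      let den := Cadd (Cmul (RtoC (m21 A)) z) (RtoC (m22 A)) in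
      if Req_dec_T (fst den) 0 then
        if Req_dec_T (snd den) 0 then None else Some (mobius_fin A z)
      else Some (mobius_fin A z)
  | None => if Req_dec_T (m21 A) 0 then None else Some (RtoC (m11 A / m21 A))
  end.

Definition in_disk (c r : R) (p : option Cx) : Prop :=
  match p with Some z => Cabs (Csub z (RtoC c)) < r | None => False end.
Definition in_ext (c r : R) (p : option Cx) : Prop :=
  match p with Some z => r < Cabs (Csub z (RtoC c)) | None => True end.

Definition valid_idx (m j : nat) : Prop := (1 <= j <= 2 * m)%nat.
(* j + m mod 2m, on representatives 1..2m *)
Definition opp_idx (m j : nat) : nat := if (j <=? m)%nat then (j + m)%nat else (j - m)%nat.
Definition gen (m : nat) (gam : nat -> M2) (j : nat) : M2 :=
  if (j <=? m)%nat then gam j else M2inv (gam (j - m)%nat).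

Definition schottky_data (m : nat) (c r : nat -> R) (gam : nat -> M2) : Prop :=
  (1 <= m)%nat /\
  (forall j, valid_idx m j -> 0 < r j) /\
  (forall i j, valid_idx m i -> valid_idx m j -> i <> j -> r i + r j < Rabs (c i - c j)) /\
  (forall j, (1 <= j <= m)%nat -> M2det (gam j) = 1) /\
  (forall j, (1 <= j <= m)%nat -> forall w : option Cx,
      in_disk (c (j + m)%nat) (r (j + m)%nat) w <->
      exists p, in_ext (c j) (r j) p /\ mobius (gam j) p = w).

Definition word_eval (m : nat) (gam : nat -> M2) (w : list nat) : M2 :=
  fold_right (fun a acc => M2mul (gen m gam a) acc) M2id w.

Definition in_W (m N : nat) (w : list nat) : Prop :=
  length w = N /\ Forall (valid_idx m) w /\
  (forall i, (S i < length w)%nat -> nth (S i) w 0%nat <> opp_idx m (nth i w 0%nat)).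

Definition in_Wj (m N j : nat) (w : list nat) : Prop :=
  in_W m N w /\ match w with a :: _ => a <> opp_idx m j | nil => True end.

Definition in_Gamma (m : nat) (gam : nat -> M2) (g : M2) : Prop :=
  exists w, Forall (valid_idx m) w /\ peq g (word_eval m gam w).

Definition is_subgroup (m : nat) (gam : nat -> M2) (S : M2 -> Prop) : Prop :=
  (forall g, S g -> in_Gamma m gam g) /\
  S M2id /\
  (forall g h, S g -> S h -> S (M2mul g h)) /\
  (forall g, S g -> S (M2inv g)) /\
  (forall g h, peq g h -> S g -> S h).

(* reps is a complete list of representatives of the right cosets S\Gamma,
   without repetition; its existence is exactly finiteness of the index *)
Definition is_right_transversal (m : nat) (gam : nat -> M2) (S : M2 -> Prop)
    (reps : list M2) : Prop :=
  Forall (in_Gamma m gam) reps /\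
  (forall i k, (i < length reps)%nat -> (k < length reps)%nat -> i <> k ->
     ~ S (M2mul (nth i reps M2id) (M2inv (nth k reps M2id)))) /\
  (forall g, in_Gamma m gam g ->
     exists i, (i < length reps)%nat /\ S (M2mul g (M2inv (nth i reps M2id)))).

(* character of Ind_S^Gamma 1_S at g: number of right cosets S r fixed by g,
   i.e. of r with r g r^{-1} in S *)
Definition ind_trace (S : M2 -> Prop) (reps : list M2) (g : M2) : nat :=
  length (filter (fun r => if excluded_middle_informative
                                (S (M2mul (M2mul r g) (M2inv r)))
                           then true else false) reps).

Definition arcosh (x : R) : R := ln (x + sqrt (x * x - 1)).
Definition hyp_length (g : M2) : R := 2 * arcosh (Rabs (M2tr g) / 2).

Definition is_min_geod_length (S : M2 -> Prop) (l0 : R) : Prop :=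
  (exists g, S g /\ ~ peq g M2id /\ hyp_length g = l0) /\
  (forall g, S g -> ~ peq g M2id -> l0 <= hyp_length g).

From Pilot Require Import Defs.
From Stdlib Require Import Reals List ClassicalEpsilon Lra Lia.
From Coquelicot Require Coquelicot.
Open Scope R_scope.

(* Ping-pong: for a reduced word [alpha] whose first letter is not [opp_idx j],
   the point [gamma_alpha^{-1} z] lies in the closed disk of the last letter of
   [alpha], and the points of two distinct words of length [N] are at distance
   at least [delta K^{-N}] (distinct last letters are separated by the gaps
   between the disks; a common last letter contracts distances by at most a
   fixed factor).  So [|gamma_alpha^{-1} z - gamma_beta^{-1} z| < C h] forces
   [log (1/h) <= O(N)].  A nonvanishing induced character makes
   [gamma_alpha gamma_beta^{-1}] conjugate into the subgroup, and it is
   nontrivial since the two points differ; hence [l0] is at most the length of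
   its closed geodesic, which is [O(N)] because traces of words grow at most
   exponentially.  For [eps0] small these bounds contradict
   [N <= eps0 (l0 + log (1/h))] once [h] is small. *)

Ltac m2_ring := repeat match goal with A : M2 |- _ => destruct A end;
  unfold M2mul, M2inv, M2neg, M2id, M2det, M2tr in *; simpl in *;
  lazymatch goal with |- @eq M2 _ _ => f_equal; ring | _ => ring end.

Lemma M2mul_assoc A B D : M2mul (M2mul A B) D = M2mul A (M2mul B D).
Proof. m2_ring. Qed.
Lemma M2mul_1l A : M2mul M2id A = A. Proof. m2_ring. Qed.
Lemma M2mul_1r A : M2mul A M2id = A. Proof. m2_ring. Qed.
Lemma M2mul_negl A B : M2mul (M2neg A) B = M2neg (M2mul A B). Proof. m2_ring. Qed.
Lemma M2mul_negr A B : M2mul A (M2neg B) = M2neg (M2mul A B). Proof. m2_ring. Qed.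
Lemma M2inv_mul A B : M2inv (M2mul A B) = M2mul (M2inv B) (M2inv A). Proof. m2_ring. Qed.
Lemma M2inv_inv A : M2inv (M2inv A) = A. Proof. m2_ring. Qed.
Lemma M2inv_neg A : M2inv (M2neg A) = M2neg (M2inv A). Proof. m2_ring. Qed.
Lemma M2inv_id : M2inv M2id = M2id. Proof. m2_ring. Qed.
Lemma M2det_mul A B : M2det (M2mul A B) = M2det A * M2det B. Proof. m2_ring. Qed.
Lemma M2det_inv A : M2det (M2inv A) = M2det A. Proof. m2_ring. Qed.
Lemma M2det_neg A : M2det (M2neg A) = M2det A. Proof. m2_ring. Qed.
Lemma M2tr_conj P g : M2tr (M2mul (M2mul P g) (M2inv P)) = M2det P * M2tr g.
Proof. m2_ring. Qed.

Lemma M2mulV A : M2det A = 1 -> M2mul A (M2inv A) = M2id.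
Proof. destruct A; unfold M2mul, M2inv, M2id, M2det; simpl; intro; f_equal; lra. Qed.
Lemma M2mulVl A : M2det A = 1 -> M2mul (M2inv A) A = M2id.
Proof. destruct A; unfold M2mul, M2inv, M2id, M2det; simpl; intro; f_equal; lra. Qed.

Lemma M2conjK P g : M2det P = 1 ->
  M2mul (M2mul (M2inv P) (M2mul (M2mul P g) (M2inv P))) P = g.
Proof.
  intro HP. rewrite !M2mul_assoc, M2mulVl, M2mul_1r by exact HP.
  rewrite <- M2mul_assoc, M2mulVl, M2mul_1l by exact HP. reflexivity.
Qed.

Lemma peq_conj_id P g : M2det P = 1 ->
  peq (M2mul (M2mul P g) (M2inv P)) M2id -> peq g M2id.
Proof.
  intros HP [E|E]; rewrite <- (M2conjK P g HP), E.
  - left. rewrite M2mul_1r, M2mulVl; auto.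
  - right. rewrite M2mul_negr, M2mul_negl, M2mul_1r, M2mulVl; auto.
Qed.

Definition M2norm2 (A : M2) : R :=
  m11 A * m11 A + m12 A * m12 A + m21 A * m21 A + m22 A * m22 A.

Lemma M2norm2_ge0 A : 0 <= M2norm2 A.
Proof. unfold M2norm2; nra. Qed.

Lemma M2norm2_inv A : M2norm2 (M2inv A) = M2norm2 A.
Proof. destruct A; unfold M2norm2, M2inv; simpl; ring. Qed.

(* Cauchy-Schwarz, with the defect written as an explicit sum of squares. *)
Lemma M2norm2_mul_le A B : M2norm2 (M2mul A B) <= M2norm2 A * M2norm2 B.
Proof.
  destruct A as [a b c d], B as [e f g h]; unfold M2norm2, M2mul; simpl.
  assert (E : (a*a+b*b+c*c+d*d)*(e*e+f*f+g*g+h*h) -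
    ((a*e+b*g)*(a*e+b*g) + (a*f+b*h)*(a*f+b*h) + (c*e+d*g)*(c*e+d*g) + (c*f+d*h)*(c*f+d*h))
    = (a*g-b*e)*(a*g-b*e) + (a*h-b*f)*(a*h-b*f) + (c*g-d*e)*(c*g-d*e) + (c*h-d*f)*(c*h-d*f))
    by ring.
  pose proof (Rle_0_sqr (a*g-b*e)); pose proof (Rle_0_sqr (a*h-b*f)).
  pose proof (Rle_0_sqr (c*g-d*e)); pose proof (Rle_0_sqr (c*h-d*f)).
  unfold Rsqr in *; lra.
Qed.

Lemma M2tr_sqr_le A : M2tr A * M2tr A <= 2 * M2norm2 A.
Proof.
  destruct A as [a b c d]; unfold M2norm2, M2tr; simpl.
  pose proof (Rle_0_sqr (a - d)); pose proof (Rle_0_sqr b); pose proof (Rle_0_sqr c).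
  unfold Rsqr in *; nra.
Qed.

Lemma hyp_length_conj P g : M2det P = 1 ->
  hyp_length (M2mul (M2mul P g) (M2inv P)) = hyp_length g.
Proof. intro HP. unfold hyp_length. rewrite M2tr_conj, HP, Rmult_1_l. reflexivity. Qed.

Lemma ln_le x y : 0 < x -> x <= y -> ln x <= ln y.
Proof.
  intros Hx [Hlt|Heq]; [left; apply ln_increasing; auto | rewrite Heq; lra].
Qed.

(* [arcosh] is junk below [1]: [sqrt] and [ln] return [0] on nonpositive
   arguments. *)
Lemma hyp_length_le_norm2 g : hyp_length g <= ln (4 * M2norm2 g + 2).
Proof.
  unfold hyp_length, arcosh.
  set (t := Rabs (M2tr g)). set (x := t / 2). set (y := x + sqrt (x * x - 1)).
  assert (Ht : 0 <= t) by apply Rabs_pos.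
  assert (Ht2 : t * t <= 2 * M2norm2 g).
  { unfold t; rewrite <- Rabs_mult, Rabs_pos_eq by nra. apply M2tr_sqr_le. }
  assert (Hsqrt : sqrt (x * x - 1) <= x + 1).
  { destruct (Rle_dec (x * x - 1) 0).
    - rewrite sqrt_neg_0 by assumption. unfold x; lra.
    - rewrite <- (sqrt_square (x + 1)) by (unfold x; lra).
      apply sqrt_le_1_alt. unfold x; nra. }
  pose proof (sqrt_pos (x * x - 1)). pose proof (M2norm2_ge0 g).
  assert (Hpos : 0 <= ln (4 * M2norm2 g + 2)) by (rewrite <- ln_1; apply ln_le; lra).
  destruct (Rlt_dec 0 y) as [Hy|Hy].
  - replace (2 * ln y) with (ln (y * y)) by (rewrite ln_mult; lra).
    assert (Hyt : y <= t + 1) by (unfold y, x in *; lra).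
    apply ln_le; [nra|]. pose proof (Rle_0_sqr (t - 1)). unfold Rsqr in *; nra.
  - replace (ln y) with 0; [lra|].
    unfold ln. destruct (Rlt_dec 0 y); [contradiction | reflexivity].
Qed.

Lemma valid_idx_seq m a : valid_idx m a <-> In a (seq 1 (2 * m)).
Proof. rewrite in_seq; unfold valid_idx; lia. Qed.

Lemma opp_idx_valid m a : valid_idx m a -> valid_idx m (opp_idx m a).
Proof.
  unfold valid_idx, opp_idx; destruct (Nat.leb_spec a m); lia.
Qed.

Lemma opp_idxK m a : valid_idx m a -> opp_idx m (opp_idx m a) = a.
Proof.
  unfold valid_idx, opp_idx; intro.
  destruct (Nat.leb_spec a m); [destruct (Nat.leb_spec (a + m) m)
                               | destruct (Nat.leb_spec (a - m) m)]; lia.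
Qed.

Lemma last_valid_idx m j l :
  valid_idx m j -> Forall (valid_idx m) l -> valid_idx m (last l j).
Proof. intros Hj H; induction H as [|a l Ha H IH]; simpl; auto; destruct l; auto. Qed.

Lemma gen_det m c r gam a :
  schottky_data m c r gam -> valid_idx m a -> M2det (gen m gam a) = 1.
Proof.
  intros (_ & _ & _ & Hdet & _) Ha; unfold valid_idx, gen in *.
  destruct (Nat.leb_spec a m); [|rewrite M2det_inv]; apply Hdet; lia.
Qed.

Lemma word_eval_rcons m gam l a :
  word_eval m gam (l ++ a :: nil) = M2mul (word_eval m gam l) (gen m gam a).
Proof.
  induction l as [|b l IH]; simpl.
  - rewrite M2mul_1r, M2mul_1l; reflexivity.
  - rewrite IH, M2mul_assoc; reflexivity.
Qed.

Lemma word_eval_det m c r gam w : schottky_data m c r gam ->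
  Forall (valid_idx m) w -> M2det (word_eval m gam w) = 1.
Proof.
  intros HS; induction 1; simpl.
  - unfold M2det, M2id; simpl; ring.
  - rewrite M2det_mul, IHForall, (gen_det m c r gam x); auto; ring.
Qed.

Lemma in_Gamma_det m c r gam g :
  schottky_data m c r gam -> in_Gamma m gam g -> M2det g = 1.
Proof.
  intros HS (w & Hw & [->| ->]); [|rewrite M2det_neg]; eapply word_eval_det; eauto.
Qed.

Lemma word_eval_norm2_le m gam G w : 1 <= G ->
  (forall a, valid_idx m a -> M2norm2 (gen m gam a) <= G) ->
  Forall (valid_idx m) w -> M2norm2 (word_eval m gam w) <= 2 * G ^ length w.
Proof.
  intros HG Hgen; induction 1 as [|a w Ha Hw IH]; simpl.
  - unfold M2norm2, M2id; simpl; lra.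
  - eapply Rle_trans; [apply M2norm2_mul_le|].
    pose proof (M2norm2_ge0 (gen m gam a)); pose proof (M2norm2_ge0 (word_eval m gam w)).
    pose proof (Hgen a Ha).
    replace (2 * (G * G ^ length w)) with (G * (2 * G ^ length w)) by ring.
    apply Rmult_le_compat; auto.
Qed.

Lemma in_Wj_nil m j w : in_Wj m 0 j w -> w = nil.
Proof. intros [[H _] _]; destruct w; [reflexivity | discriminate]. Qed.

Lemma in_Wj_rcons_inv m n j w : in_Wj m (S n) j w ->
  exists l a, w = l ++ a :: nil /\ in_Wj m n j l /\
              valid_idx m a /\ a <> opp_idx m (last l j).
Proof.
  intros [[Hlen [Hval Hadj]] Hfirst].
  destruct (exists_last (l := w)) as (l & a & ->); [intros ->; discriminate|].
  rewrite length_app in Hlen; simpl in Hlen.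
  apply Forall_app in Hval as [Hl Ha]; inversion Ha; subst.
  exists l, a; split; [reflexivity|]; split; [split; [split; [lia | split; [exact Hl|]]|]|
                                               split; [assumption|]].
  - intros i Hi. rewrite <- !(app_nth1 l (a :: nil)) by lia.
    apply Hadj. rewrite length_app; simpl; lia.
  - destruct l; auto.
  - destruct l as [|b0 l0]; [exact Hfirst|].
    destruct (exists_last (l := b0 :: l0)) as (l' & b & El); [discriminate|].
    rewrite El, last_last. specialize (Hadj (length l')). rewrite El in Hadj.
    rewrite <- (last_length l' b), nth_middle, app_nth1, nth_middle in Hadj
      by (rewrite last_length; lia).
    apply Hadj; rewrite !last_length; lia.
Qed.

Lemma finite_upper_bound {A} (f : A -> R) (l : list A) :
  exists B, 1 <= B /\ forall x, In x l -> f x <= B.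
Proof.
  induction l as [|a l (B & HB & IH)]; [exists 1; split; [lra | contradiction]|].
  exists (Rmax B (f a)); split; [eapply Rle_trans; [exact HB | apply Rmax_l]|].
  intros x [<-|Hx]; [apply Rmax_r | eapply Rle_trans; [apply IH, Hx | apply Rmax_l]].
Qed.

Lemma finite_pos_lower_bound {A} (P : A -> Prop) (f : A -> R) (l : list A) :
  (forall x, In x l -> P x -> 0 < f x) ->
  exists d, 0 < d /\ forall x, In x l -> P x -> d <= f x.
Proof.
  induction l as [|a l IH]; intros Hpos; [exists 1; split; [lra | contradiction]|].
  destruct IH as (d & Hd & Hl); [intros x Hx; apply Hpos; right; exact Hx|].
  destruct (excluded_middle_informative (P a)) as [Ha|Ha].
  - exists (Rmin d (f a)); split; [apply Rmin_glb_lt; auto; apply Hpos; auto; left; auto|].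
    intros x [<-|Hx] Hp; [apply Rmin_r | eapply Rle_trans; [apply Rmin_l | auto]].
  - exists d; split; auto. intros x [<-|Hx] Hp; [contradiction | auto].
Qed.

Lemma hyp_length_word_growth m c r gam : schottky_data m c r gam ->
  exists a b, 0 <= a /\ forall N alpha beta,
    in_W m N alpha -> in_W m N beta ->
    hyp_length (M2mul (word_eval m gam alpha) (M2inv (word_eval m gam beta)))
      <= b + a * INR N.
Proof.
  intros HS.
  destruct (finite_upper_bound (fun a => M2norm2 (gen m gam a)) (seq 1 (2 * m)))
    as (G & HG1 & HG).
  exists (ln (G * G)), (ln 18); split; [rewrite <- ln_1; apply ln_le; nra|].
  intros N alpha beta (La & Va & _) (Lb & Vb & _).
  set (g := M2mul _ _).
  assert (Hgen : forall a, valid_idx m a -> M2norm2 (gen m gam a) <= G)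
    by (intros a Ha; apply HG, valid_idx_seq, Ha).
  pose proof (word_eval_norm2_le m gam G alpha HG1 Hgen Va) as Ha.
  pose proof (word_eval_norm2_le m gam G beta HG1 Hgen Vb) as Hb.
  rewrite La in Ha; rewrite Lb in Hb.
  assert (Hg : M2norm2 g <= 4 * (G * G) ^ N).
  { unfold g. eapply Rle_trans; [apply M2norm2_mul_le|]. rewrite M2norm2_inv, Rpow_mult_distr.
    pose proof (M2norm2_ge0 (word_eval m gam alpha)).
    pose proof (M2norm2_ge0 (word_eval m gam beta)).
    replace (4 * (G ^ N * G ^ N)) with ((2 * G ^ N) * (2 * G ^ N)) by ring.
    apply Rmult_le_compat; auto. }
  assert (HGN : 1 <= (G * G) ^ N) by (apply pow_R1_Rle; nra).
  eapply Rle_trans; [apply hyp_length_le_norm2|].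
  rewrite (Rmult_comm (ln _)), <- ln_pow, <- ln_mult by nra.
  apply ln_le; pose proof (M2norm2_ge0 g); nra.
Qed.

Lemma ind_trace_neq0 S reps g : ind_trace S reps g <> 0%nat ->
  exists P, In P reps /\ S (M2mul (M2mul P g) (M2inv P)).
Proof.
  unfold ind_trace; intro H.
  destruct (filter _ reps) as [|P l] eqn:E; [contradiction|].
  assert (HP : In P (P :: l)) by (left; reflexivity). rewrite <- E in HP.
  apply filter_In in HP as [Hin HS]. exists P; split; auto.
  destruct excluded_middle_informative; [assumption | discriminate].
Qed.

(* [ind_trace S reps g <> 0] means that [g] is conjugate into [S]. *)
Lemma min_geod_length_le m c r gam S reps l0 g : schottky_data m c r gam ->
  is_right_transversal m gam S reps -> is_min_geod_length S l0 ->
  ind_trace S reps g <> 0%nat -> ~ peq g M2id -> l0 <= hyp_length g.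
Proof.
  intros HS [Hreps _] [_ Hmin] Htr Hg.
  destruct (ind_trace_neq0 S reps g Htr) as (P & HP & HSP).
  assert (HdetP : M2det P = 1)
    by (eapply in_Gamma_det; [exact HS | rewrite Forall_forall in Hreps; auto]).
  rewrite <- (hyp_length_conj P g HdetP).
  apply Hmin; [exact HSP|]. intro E; apply Hg; exact (peq_conj_id P g HdetP E).
Qed.

Module PingPong.
Import Coquelicot.Coquelicot.
Local Open Scope C_scope.

Ltac Ceq := match goal with |- ?x = ?y => change (@eq C x y) end.

Definition mob_den (A : M2) (z : C) : C := RtoC (m21 A) * z + RtoC (m22 A).

Lemma Cabs_Csub z w : Cabs (Csub z w) = Cmod (z - w).
Proof.
  destruct z as [x y], w as [x' y']; unfold Cabs, Csub, Cmod, Cnorm2; simpl.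
  f_equal; ring.
Qed.

Lemma in_disk_Some c0 r0 z : in_disk c0 r0 (Some z) <-> Cmod (z - RtoC c0) < r0.
Proof. unfold in_disk; rewrite Cabs_Csub; reflexivity. Qed.

Lemma in_ext_Some c0 r0 z : in_ext c0 r0 (Some z) <-> r0 < Cmod (z - RtoC c0).
Proof. unfold in_ext; rewrite Cabs_Csub; reflexivity. Qed.

Lemma Cinv_Cinv z : Defs.Cinv z = Cinv z.
Proof.
  destruct z as [x y]; unfold Defs.Cinv, Cinv, Cnorm2; simpl.
  replace (x * (x * 1) + y * (y * 1))%R with (x * x + y * y)%R by ring; reflexivity.
Qed.

Lemma mobius_fin_eq A z :
  mobius_fin A z = (RtoC (m11 A) * z + RtoC (m12 A)) / mob_den A z.
Proof. unfold mobius_fin, Defs.Cdiv; rewrite Cinv_Cinv; reflexivity. Qed.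

Lemma mobius_Some A (z : Cx) : mobius A (Some z) = None \/
  (mob_den A z <> 0 /\ mobius A (Some z) = Some (mobius_fin A z)).
Proof.
  simpl. destruct (Req_dec_T _ 0) as [E1|N1]; [destruct (Req_dec_T _ 0) as [E2|N2]|].
  - left; reflexivity.
  - right; split; [intros H; apply N2, (f_equal snd H) | reflexivity].
  - right; split; [intros H; apply N1, (f_equal fst H) | reflexivity].
Qed.

Lemma mobius_fin_id z : mobius_fin M2id z = z /\ mob_den M2id z = 1.
Proof. rewrite mobius_fin_eq; unfold mob_den, M2id; simpl; split; Ceq; field. Qed.

Lemma mobius_fin_mul A B z : mob_den B z <> 0 -> mob_den A (mobius_fin B z) <> 0 ->
  mobius_fin (M2mul A B) z = mobius_fin A (mobius_fin B z) /\
  mob_den (M2mul A B) z = mob_den A (mobius_fin B z) * mob_den B z.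
Proof.
  rewrite !mobius_fin_eq; unfold mob_den.
  destruct A as [a1 b1 c1 d1], B as [a2 b2 c2 d2]; simpl; intros HB HA.
  assert (Eden : RtoC (c1 * a2 + d1 * c2) * z + RtoC (c1 * b2 + d1 * d2)
    = (RtoC c1 * ((RtoC a2 * z + RtoC b2) / (RtoC c2 * z + RtoC d2)) + RtoC d1)
      * (RtoC c2 * z + RtoC d2))
    by (rewrite !RtoC_plus, !RtoC_mult; Ceq; field; exact HB).
  split; [|exact Eden]. rewrite Eden, !RtoC_plus, !RtoC_mult; Ceq; field.
  split; [exact HB|]. intros H0. apply (Cmult_neq_0 _ _ HA HB).
  rewrite <- H0; Ceq; field; exact HB.
Qed.

Lemma mobius_fin_sub A x y : M2det A = 1 -> mob_den A x <> 0 -> mob_den A y <> 0 ->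
  mobius_fin A x - mobius_fin A y = (x - y) / (mob_den A x * mob_den A y).
Proof.
  rewrite !mobius_fin_eq; unfold mob_den, M2det.
  destruct A as [a b c d]; simpl; intros Hdet Hx Hy.
  assert (E : RtoC a * RtoC d - RtoC b * RtoC c = 1)
    by (rewrite <- !RtoC_mult, <- RtoC_minus, Hdet; reflexivity).
  Ceq. rewrite <- (Cmult_1_l (x - y)), <- E. field; auto.
Qed.

Lemma mobius_fin_neg A z : mob_den A z <> 0 -> mobius_fin (M2neg A) z = mobius_fin A z.
Proof.
  rewrite !mobius_fin_eq; unfold mob_den, M2neg.
  destruct A as [a b c d]; simpl; intros Hz. rewrite !RtoC_opp.
  replace (- RtoC c * z + - RtoC d) with (- (RtoC c * z + RtoC d)) by (Ceq; ring).
  Ceq; field; exact Hz.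
Qed.

Lemma mob_den_inv_eq0 M w : M2det M = 1 -> mob_den (M2inv M) w = 0 ->
  mobius M None = Some w.
Proof.
  unfold mob_den, M2det, M2inv; destruct M as [a b c d]; simpl; intros Hdet Hw.
  destruct (Req_dec_T c 0) as [->|Hc].
  - apply (f_equal fst) in Hw; simpl in Hw. nra.
  - f_equal. rewrite RtoC_div by exact Hc.
    assert (HcC : RtoC c <> 0) by (intros H; apply Hc, (f_equal fst H)).
    replace w with (- (RtoC (- c) * w + RtoC a) / RtoC c + RtoC a / RtoC c)
      by (rewrite RtoC_opp; Ceq; field; exact HcC).
    rewrite Hw; Ceq; field; exact HcC.
Qed.

Lemma in_disk_mobius_inv M w c0 r0 : M2det M = 1 -> mob_den (M2inv M) w <> 0 ->
  in_disk c0 r0 (mobius M (Some (mobius_fin (M2inv M) w))) -> in_disk c0 r0 (Some w).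
Proof.
  intros Hdet Hw. destruct (mobius_Some M (mobius_fin (M2inv M) w)) as [-> | [Hx ->]].
  - intros [].
  - destruct (mobius_fin_mul M (M2inv M) w Hw Hx) as [E _].
    rewrite <- E, M2mulV, (proj1 (mobius_fin_id w)) by exact Hdet; auto.
Qed.

Lemma closed_disks_dist_ge (x y : C) ci ck ri rk :
  Cmod (x - RtoC ci) <= ri -> Cmod (y - RtoC ck) <= rk ->
  Rabs (ci - ck) - ri - rk <= Cmod (x - y).
Proof.
  intros Hx Hy. rewrite <- Cmod_R, RtoC_minus.
  replace (RtoC ci - RtoC ck) with (- (x - RtoC ci) + (x - y) + (y - RtoC ck)) by (Ceq; ring).
  pose proof (Cmod_triangle (- (x - RtoC ci) + (x - y)) (y - RtoC ck)).
  pose proof (Cmod_triangle (- (x - RtoC ci)) (x - y)).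
  rewrite Cmod_opp in *. lra.
Qed.

Section Schottky.
Variables (m : nat) (c r : nat -> R) (gam : nat -> M2).
Hypothesis HS : schottky_data m c r gam.

Lemma closed_disks_disjoint i k x : valid_idx m i -> valid_idx m k -> i <> k ->
  Cmod (x - RtoC (c i)) <= r i -> Cmod (x - RtoC (c k)) <= r k -> False.
Proof.
  intros Hi Hk Hik Hxi Hxk.
  pose proof (closed_disks_dist_ge x x _ _ _ _ Hxi Hxk) as Hdist.
  replace (x - x) with (RtoC 0) in Hdist by (Ceq; ring). rewrite Cmod_0 in Hdist.
  destruct HS as (_ & _ & Hsep & _). specialize (Hsep i k Hi Hk Hik). lra.
Qed.

Lemma gen_inv_into_disk a (w : Cx) : valid_idx m a ->
  r (opp_idx m a) < Cmod (w - RtoC (c (opp_idx m a))) ->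
  mob_den (M2inv (gen m gam a)) w <> 0 /\
  Cmod (mobius_fin (M2inv (gen m gam a)) w - RtoC (c a)) <= r a.
Proof.
  destruct HS as (_ & _ & _ & Hdet & Hmap).
  unfold valid_idx, gen, opp_idx; intros Ha Hw.
  destruct (Nat.leb_spec a m) as [Ham|Ham]; cbv iota in Hw |- *.
  - specialize (Hdet a ltac:(lia)); specialize (Hmap a ltac:(lia)).
    assert (Hden : mob_den (M2inv (gam a)) w <> 0).
    { intros H0. apply (Rlt_not_le _ _ Hw), Rlt_le, in_disk_Some.
      apply Hmap; exists None; split; [exact I | exact (mob_den_inv_eq0 _ _ Hdet H0)]. }
    split; [exact Hden|]. apply Rnot_lt_le; intros Hx.
    apply (Rlt_not_le _ _ Hw), Rlt_le, in_disk_Some.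
    apply (in_disk_mobius_inv (gam a)); auto.
    apply Hmap; eexists; split; [apply in_ext_Some, Hx | reflexivity].
  - rewrite M2inv_inv.
    assert (Hin : in_disk (c a) (r a) (mobius (gam (a - m)%nat) (Some w))).
    { replace a with (a - m + m)%nat at 1 2 by lia.
      apply Hmap; [lia|]. exists (Some w); split; [apply in_ext_Some, Hw | reflexivity]. }
    destruct (mobius_Some (gam (a - m)%nat) w) as [E | [Hden E]]; rewrite E in Hin.
    + destruct Hin.
    + split; [exact Hden | apply Rlt_le, in_disk_Some, Hin].
Qed.

Definition word_pt (z : C) (l : list nat) : C := mobius_fin (M2inv (word_eval m gam l)) z.

Lemma word_pt_rcons z l a b :
  mob_den (M2inv (word_eval m gam l)) z <> 0 ->
  Cmod (word_pt z l - RtoC (c b)) <= r b -> valid_idx m b ->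
  valid_idx m a -> a <> opp_idx m b ->
  word_pt z (l ++ a :: nil) = mobius_fin (M2inv (gen m gam a)) (word_pt z l) /\
  mob_den (M2inv (gen m gam a)) (word_pt z l) <> 0 /\
  mob_den (M2inv (word_eval m gam (l ++ a :: nil))) z <> 0 /\
  Cmod (word_pt z (l ++ a :: nil) - RtoC (c a)) <= r a.
Proof.
  intros Hden Hb Hbv Ha Hab.
  assert (Hout : r (opp_idx m a) < Cmod (word_pt z l - RtoC (c (opp_idx m a)))).
  { apply Rnot_le_lt; intros Hle.
    apply (closed_disks_disjoint b (opp_idx m a) (word_pt z l)); auto using opp_idx_valid.
    intros E; apply Hab; rewrite E, opp_idxK; auto. }
  destruct (gen_inv_into_disk a _ Ha Hout) as [Hden' Hin].
  unfold word_pt in *; rewrite word_eval_rcons, M2inv_mul.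
  destruct (mobius_fin_mul _ _ z Hden Hden') as [-> ->].
  repeat split; auto using Cmult_neq_0.
Qed.

Lemma word_pt_in_disk j z : valid_idx m j -> Cmod (z - RtoC (c j)) < r j ->
  forall n l, in_Wj m n j l ->
  mob_den (M2inv (word_eval m gam l)) z <> 0 /\
  Cmod (word_pt z l - RtoC (c (last l j))) <= r (last l j).
Proof.
  intros Hj Hz n; induction n as [|n IH]; intros l Hl.
  - rewrite (in_Wj_nil m j l Hl); unfold word_pt; simpl.
    rewrite M2inv_id; destruct (mobius_fin_id z) as [-> ->].
    split; [intros H; apply R1_neq_R0, (f_equal fst H) | lra].
  - destruct (in_Wj_rcons_inv m n j l Hl) as (u & a & -> & Hu & Ha & Hau).
    destruct (IH u Hu) as [Hden Hin].
    assert (Hlast : valid_idx m (last u j)) by (apply last_valid_idx; [exact Hj | apply Hu]).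
    rewrite last_last. apply (word_pt_rcons z u a _ Hden Hin Hlast Ha Hau).
Qed.

Lemma schottky_gap : exists delta, 0 < delta /\ forall i k,
  valid_idx m i -> valid_idx m k -> i <> k -> delta <= Rabs (c i - c k) - r i - r k.
Proof.
  destruct HS as (_ & _ & Hsep & _).
  destruct (finite_pos_lower_bound (fun p => fst p <> snd p)
              (fun p => Rabs (c (fst p) - c (snd p)) - r (fst p) - r (snd p))%R
              (list_prod (seq 1 (2 * m)) (seq 1 (2 * m)))) as (d & Hd & Hmin).
  - intros [i k] Hik; simpl; intros Hne. apply in_prod_iff in Hik as [Hi Hk].
    specialize (Hsep i k (proj2 (valid_idx_seq m i) Hi) (proj2 (valid_idx_seq m k) Hk) Hne).
    lra.
  - exists d; split; [exact Hd|]. intros i k Hi Hk Hne.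
    apply (Hmin (i, k)); [apply in_prod_iff; split; apply valid_idx_seq |]; assumption.
Qed.

Lemma mob_den_bound : exists B, 1 <= B /\ forall a b x,
  valid_idx m a -> valid_idx m b -> Cmod (x - RtoC (c b)) <= r b ->
  Cmod (mob_den (M2inv (gen m gam a)) x) <= B.
Proof.
  destruct (finite_upper_bound (fun b => Rabs (c b) + r b)%R (seq 1 (2 * m)))
    as (R1 & HR1 & Hdisk).
  destruct (finite_upper_bound
              (fun a => Rabs (m21 (M2inv (gen m gam a))) + Rabs (m22 (M2inv (gen m gam a))))%R
              (seq 1 (2 * m))) as (E & HE & Hcoef).
  exists (E * R1)%R; split; [nra|]. intros a b x Ha Hb Hx.
  assert (Hxb : Cmod x <= R1).
  { replace x with ((x - RtoC (c b)) + RtoC (c b)) by (Ceq; ring).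
    eapply Rle_trans; [apply Cmod_triangle|]. rewrite Cmod_R.
    specialize (Hdisk b (proj1 (valid_idx_seq m b) Hb)); simpl in Hdisk; lra. }
  specialize (Hcoef a (proj1 (valid_idx_seq m a) Ha)).
  unfold mob_den. eapply Rle_trans; [apply Cmod_triangle|]. rewrite Cmod_mult, !Cmod_R.
  set (u := Rabs (m21 _)) in *; set (v := Rabs (m22 _)) in *.
  assert (0 <= u) by apply Rabs_pos; assert (0 <= v) by apply Rabs_pos.
  pose proof (Cmod_ge_0 x). nra.
Qed.

(* Distinct reduced words end in distinct disks, or share a last letter whose
   inverse contracts distances by at most [B^2]. *)
Lemma word_pt_separation j z delta B : valid_idx m j -> Cmod (z - RtoC (c j)) < r j ->
  1 <= B ->
  (forall i k, valid_idx m i -> valid_idx m k -> i <> k ->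
     delta <= Rabs (c i - c k) - r i - r k) ->
  (forall a b x, valid_idx m a -> valid_idx m b -> Cmod (x - RtoC (c b)) <= r b ->
     Cmod (mob_den (M2inv (gen m gam a)) x) <= B) ->
  forall n l1 l2, in_Wj m n j l1 -> in_Wj m n j l2 -> l1 <> l2 ->
  delta <= (B * B) ^ n * Cmod (word_pt z l1 - word_pt z l2).
Proof.
  intros Hj Hz HB Hgap Hden n.
  induction n as [|n IH]; intros l1 l2 H1 H2 Hne.
  { rewrite (in_Wj_nil m j l1 H1), (in_Wj_nil m j l2 H2) in Hne; contradiction. }
  destruct (in_Wj_rcons_inv m n j l1 H1) as (u & a & -> & Hu & Ha & Hau).
  destruct (in_Wj_rcons_inv m n j l2 H2) as (v & b & -> & Hv & Hb & Hbv).
  destruct (word_pt_in_disk j z Hj Hz n u Hu) as [Hdu Hcu].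
  destruct (word_pt_in_disk j z Hj Hz n v Hv) as [Hdv Hcv].
  assert (Hlu : valid_idx m (last u j)) by (apply last_valid_idx; [exact Hj | apply Hu]).
  assert (Hlv : valid_idx m (last v j)) by (apply last_valid_idx; [exact Hj | apply Hv]).
  destruct (word_pt_rcons z u a _ Hdu Hcu Hlu Ha Hau) as (Eu & Du & _ & Cu).
  destruct (word_pt_rcons z v b _ Hdv Hcv Hlv Hb Hbv) as (Ev & Dv & _ & Cv).
  assert (HBn : 1 <= (B * B) ^ S n) by (apply pow_R1_Rle; nra).
  destruct (Nat.eq_dec a b) as [<-|Hab].
  - assert (Huv : u <> v) by (intros ->; contradiction).
    specialize (IH u v Hu Hv Huv).
    rewrite Eu, Ev, mobius_fin_sub, Cmod_div, Cmod_mult by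
      (auto using Cmult_neq_0; rewrite M2det_inv; exact (gen_det m c r gam a HS Ha)).
    pose proof (Hden a _ _ Ha Hlu Hcu) as Hd1; pose proof (Hden a _ _ Ha Hlv Hcv) as Hd2.
    apply Cmod_gt_0 in Du; apply Cmod_gt_0 in Dv.
    set (d1 := Cmod (mob_den _ (word_pt z u))) in *.
    set (d2 := Cmod (mob_den _ (word_pt z v))) in *.
    set (X := Cmod (word_pt z u - word_pt z v)) in *.
    replace ((B * B) ^ S n * (X / (d1 * d2)))%R with
      ((B * B) ^ n * X * ((B * B) / (d1 * d2)))%R by (simpl; field; lra).
    assert (1 <= (B * B) / (d1 * d2))
      by (apply (Rmult_le_reg_r (d1 * d2)); [nra | field_simplify; nra]).
    assert (0 <= (B * B) ^ n * X)
      by (apply Rmult_le_pos; [apply pow_le; nra | apply Cmod_ge_0]).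
    nra.
  - pose proof (closed_disks_dist_ge _ _ _ _ _ _ Cu Cv).
    pose proof (Hgap a b Ha Hb Hab).
    pose proof (Cmod_ge_0 (word_pt z (u ++ a :: nil) - word_pt z (v ++ b :: nil))). nra.
Qed.

Lemma word_pt_eq_of_peq j z n alpha beta : valid_idx m j -> Cmod (z - RtoC (c j)) < r j ->
  in_Wj m n j alpha -> in_Wj m n j beta ->
  peq (M2mul (word_eval m gam alpha) (M2inv (word_eval m gam beta))) M2id ->
  word_pt z alpha = word_pt z beta.
Proof.
  intros Hj Hz Ha Hb Hpeq.
  assert (Hdet : M2det (word_eval m gam beta) = 1)
    by (apply (word_eval_det m c r gam beta HS), Hb).
  assert (E : word_eval m gam alpha =
    M2mul (M2mul (word_eval m gam alpha) (M2inv (word_eval m gam beta))) (word_eval m gam beta))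
    by (rewrite M2mul_assoc, M2mulVl, M2mul_1r by exact Hdet; reflexivity).
  unfold word_pt; rewrite E.
  destruct Hpeq as [-> | ->]; rewrite ?M2mul_negl, M2mul_1l; [reflexivity|].
  rewrite M2inv_neg, mobius_fin_neg; [reflexivity|].
  exact (proj1 (word_pt_in_disk j z Hj Hz n beta Hb)).
Qed.

Lemma schottky_separation : exists delta K, 0 < delta /\ 1 <= K /\
  forall N j z alpha beta, valid_idx m j -> in_disk (c j) (r j) (Some z) ->
  in_Wj m N j alpha -> in_Wj m N j beta -> alpha <> beta ->
  delta <= K ^ N * Cabs (Csub (mobius_fin (M2inv (word_eval m gam alpha)) z)
                              (mobius_fin (M2inv (word_eval m gam beta)) z)).
Proof.
  destruct schottky_gap as (delta & Hdelta & Hgap).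
  destruct mob_den_bound as (B & HB & Hden).
  exists delta, (B * B)%R; split; [exact Hdelta | split; [nra|]].
  intros N j z alpha beta Hj Hz Ha Hb Hne. rewrite Cabs_Csub.
  exact (word_pt_separation j z delta B Hj (proj1 (in_disk_Some _ _ _) Hz)
           HB Hgap Hden N alpha beta Ha Hb Hne).
Qed.

Lemma word_quotient_nontrivial N j z alpha beta :
  valid_idx m j -> in_disk (c j) (r j) (Some z) ->
  in_Wj m N j alpha -> in_Wj m N j beta -> alpha <> beta ->
  ~ peq (M2mul (word_eval m gam alpha) (M2inv (word_eval m gam beta))) M2id.
Proof.
  intros Hj Hz Ha Hb Hne Hpeq.
  destruct schottky_separation as (delta & K & Hdelta & HK & Hsep).
  specialize (Hsep N j z alpha beta Hj Hz Ha Hb Hne).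
  apply in_disk_Some in Hz.
  rewrite Cabs_Csub in Hsep.
  change (delta <= K ^ N * Cmod (word_pt z alpha - word_pt z beta)) in Hsep.
  rewrite (word_pt_eq_of_peq j z N alpha beta Hj Hz Ha Hb Hpeq) in Hsep.
  replace (word_pt z beta - word_pt z beta) with (RtoC 0) in Hsep by (Ceq; ring).
  rewrite Cmod_0, Rmult_0_r in Hsep. lra.
Qed.

End Schottky.

End PingPong.

Lemma ln_inv_lt_of_separation delta K C h N d : 0 < delta -> 0 < K -> 0 < C -> 0 < h ->
  delta <= K ^ N * d -> d < C * h -> ln (/ h) < (ln C - ln delta) + ln K * INR N.
Proof.
  intros Hdelta HK HC Hh Hsep Hd.
  assert (HKN : 0 < K ^ N) by (apply pow_lt, HK).
  assert (Hlt : delta < K ^ N * (C * h)) by (eapply Rle_lt_trans; [exact Hsep|];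
                                              apply Rmult_lt_compat_l; auto).
  apply ln_increasing in Hlt; [|exact Hdelta].
  rewrite !ln_mult, ln_pow in Hlt by (try apply Rmult_lt_0_compat; auto).
  rewrite ln_Rinv by exact Hh. lra.
Qed.

(* Feeding [n <= 2 eps (b + L)] back into [L < K + k n] costs at most [L / 2]. *)
Lemma log_budget_bound a b k K n l L : 0 <= a -> 0 <= k -> 0 <= n ->
  n <= / (4 * (a + k + 1)) * (l + L) -> l <= b + a * n -> L < K + k * n -> L < 2 * K + b.
Proof.
  intros Ha Hk Hn Hbudget Hl HL.
  set (eps := / (4 * (a + k + 1))) in Hbudget.
  assert (Heps : 0 < eps) by (apply Rinv_0_lt_compat; lra).
  assert (Hea : eps * a <= 1/2 /\ eps * k <= 1/4) by
    (unfold eps; split; apply (Rmult_le_reg_l (4 * (a + k + 1))); try lra; field_simplify; lra).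
  assert (Hn2 : n / 2 <= eps * (b + L)).
  { assert (eps * l <= eps * (b + a * n)) by (apply Rmult_le_compat_l; lra).
    assert (eps * a * n <= 1/2 * n) by (apply Rmult_le_compat_r; lra). nra. }
  assert (HbL : 0 <= b + L) by nra.
  assert (k * n <= (b + L) / 2).
  { assert (k * (n / 2) <= k * (eps * (b + L))) by (apply Rmult_le_compat_l; lra).
    assert (eps * k * (b + L) <= 1/4 * (b + L)) by (apply Rmult_le_compat_r; lra). nra. }
  lra.
Qed.

Lemma ln_inv_gt x h : 0 < h -> h < exp (- x) -> x < ln (/ h).
Proof.
  intros Hh Hhx. rewrite ln_Rinv by exact Hh.
  apply ln_increasing in Hhx; [rewrite ln_exp in Hhx; lra | exact Hh].
Qed.

Theorem lemma5p3 :
  forall (m : nat) (c r : nat -> R) (gam : nat -> M2),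
  schottky_data m c r gam ->
  forall C : R, 0 < C ->
  exists h1 eps0 : R, 0 < h1 < 1 /\ 0 < eps0 /\
  forall h : R, 0 < h < h1 ->
  forall (S : M2 -> Prop) (reps : list M2),
  is_subgroup m gam S -> is_right_transversal m gam S reps ->
  forall l0 : R, is_min_geod_length S l0 ->
  forall N : nat, INR N <= eps0 * (l0 + ln (/ h)) ->
  forall j : nat, valid_idx m j ->
  forall z : Cx, in_disk (c j) (r j) (Some z) ->
  forall alpha beta : list nat, in_Wj m N j alpha -> in_Wj m N j beta ->
  ind_trace S reps (M2mul (word_eval m gam alpha) (M2inv (word_eval m gam beta))) <> 0%nat ->
  Cabs (Csub (mobius_fin (M2inv (word_eval m gam alpha)) z)
             (mobius_fin (M2inv (word_eval m gam beta)) z)) < C * h ->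
  alpha = beta.
Proof.
  intros m c r gam HS C HC.
  destruct (PingPong.schottky_separation m c r gam HS) as (delta & K & Hdelta & HK & Hsep).
  destruct (hyp_length_word_growth m c r gam HS) as (a & b & Ha & Hgrowth).
  set (D := ln C - ln delta).
  assert (Hk : 0 <= ln K) by (rewrite <- ln_1; apply ln_le; lra).
  exists (Rmin (1/2) (exp (- Rabs (2 * D + b)))), (/ (4 * (a + ln K + 1))).
  split; [split; [apply Rmin_glb_lt; [lra | apply exp_pos] |
                  eapply Rle_lt_trans; [apply Rmin_l | lra]] |
          split; [apply Rinv_0_lt_compat; lra|]].
  intros h [Hh Hh1] S reps _ Htrans l0 Hl0 N HN j Hj z Hz alpha beta Halpha Hbeta Htr Hdist.
  destruct (list_eq_dec Nat.eq_dec alpha beta) as [Heq|Hne]; [exact Heq | exfalso].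
  pose proof (ln_inv_lt_of_separation delta K C h N _ Hdelta ltac:(lra) HC Hh
                (Hsep N j z alpha beta Hj Hz Halpha Hbeta Hne) Hdist) as HL.
  assert (Hl0g : l0 <= b + a * INR N).
  { eapply Rle_trans; [eapply (min_geod_length_le m c r gam S reps); eauto|].
    - exact (PingPong.word_quotient_nontrivial m c r gam HS N j z alpha beta Hj Hz Halpha Hbeta Hne).
    - apply Hgrowth; [apply Halpha | apply Hbeta]. }
  pose proof (log_budget_bound a b (ln K) D (INR N) l0 (ln (/ h)) Ha Hk (pos_INR N) HN Hl0g HL).
  pose proof (ln_inv_gt _ h Hh (Rlt_le_trans _ _ _ Hh1 (Rmin_r _ _))).
  pose proof (Rle_abs (2 * D + b)). lra.
Qed.
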